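(* Let $k$ be a field of characteristic zero, let $S$ be the first Weyl algebra over $k$, generated by $x,y$ subject to $yx-xy=1$, let $R=k[x]\subseteq S$, and let $f$ be the inclusion. Then the correspondence $\mathbf r\colon\operatorname{Spec} S\to\operatorname{Spec} R$ is a single-valued continuous function, but $\lambda$ is not a left adjoint to $\rho$.
   Context: $\operatorname{Spec}$ carries the Zariski topology, closed sets $V_A(X)=\{P\in\operatorname{Spec} A:P\supseteq X\}$; for $U\subseteq\operatorname{Spec} A$, $I(U)$ is the intersection of the primes in $U$. For $P\in\operatorname{Spec} S$, $\mathbf rP$ is the set of primes of $R$ minimal over $P\cap R$; $\mathbf r$ is continuous if $\{P:\mathbf rP\subseteq V\}$ is closed for every closed $V\subseteq\operatorname{Spec} R$. For an ideal $I$ of $R$, $I^S=\operatorname{ann}_S(S/SI)$. The functor $\lambda$ sends a closed $V\subseteq\operatorname{Spec} S$ to $V_R(I(V)\cap R)$; the functor $\rho$ sends a closed $V\subseteq\operatorname{Spec} R$ to $V_S(I(V)^S)$. ''$\lambda$ is a left adjoint to $\rho$'' means $\lambda U\subseteq V\iff U\subseteq\rho V$ for all closed $U\subseteq\operatorname{Spec} S$, $V\subseteq\operatorname{Spec} R$. *)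

From HB Require Import structures.
From mathcomp Require Import all_boot all_order all_algebra.
Set Implicit Arguments. Unset Strict Implicit. Unset Printing Implicit Defensive.
Import GRing.Theory.
Local Open Scope ring_scope.

(* Subsets of a ring are Prop-valued predicates; points of Spec A are
   prime (two-sided) ideals, sets of points are predicates on predicates. *)

Definition pset (T : Type) := T -> Prop.

Definition psubset (T : Type) (X Y : pset T) := forall a, X a -> Y a.

Section Ideals.
Variable A : pzRingType.

Definition is_ideal (I : pset A) : Prop :=
  [/\ I 0,
      (forall a b, I a -> I b -> I (a - b)),
      (forall r a, I a -> I (r * a)) &
      (forall r a, I a -> I (a * r))].

Definition is_prime (P : pset A) : Prop :=
  [/\ is_ideal P, ~ P 1 &
      forall I J : pset A, is_ideal I -> is_ideal J ->
        (forall a b, I a -> J b -> P (a * b)) ->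
        psubset I P \/ psubset J P].

Definition VZ (X : pset A) : pset (pset A) :=
  fun P => is_prime P /\ psubset X P.

Definition zclosed (U : pset (pset A)) : Prop :=
  exists X : pset A, forall P, U P <-> VZ X P.

Definition IZ (U : pset (pset A)) : pset A :=
  fun a => forall P, U P -> P a.

End Ideals.

Section Correspondence.
Variables (R S : pzRingType) (f : R -> S).

Definition contr (P : pset S) : pset R := fun a => P (f a).

Definition rcorr (P : pset S) : pset (pset R) :=
  fun Q => [/\ is_prime Q, psubset (contr P) Q &
    forall Q', is_prime Q' -> psubset (contr P) Q' -> psubset Q' Q ->
      psubset Q Q'].

Definition same_set (T : Type) (X Y : pset T) := forall a, X a <-> Y a.

Definition rcorr_single_valued : Prop :=
  forall P, is_prime P ->
    exists Q, rcorr P Q /\ forall Q', rcorr P Q' -> same_set Q' Q.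

Definition rcorr_continuous : Prop :=
  forall V : pset (pset R), zclosed V ->
    zclosed (fun P : pset S => is_prime P /\ psubset (rcorr P) V).

Definition SI (I : pset R) : pset S :=
  fun z => exists n (s : 'I_n -> S) (i : 'I_n -> R),
    (forall j, I (i j)) /\ z = \sum_(j < n) s j * f (i j).

(* I^S = ann_S (S / S I) *)
Definition extS (I : pset R) : pset S :=
  fun s => forall t, SI I (s * t).

Definition lambdaF (U : pset (pset S)) : pset (pset R) := VZ (contr (IZ U)).

Definition rhoF (V : pset (pset R)) : pset (pset S) := VZ (extS (IZ V)).

Definition lambda_left_adjoint_rho : Prop :=
  forall (U : pset (pset S)) (V : pset (pset R)), zclosed U -> zclosed V ->
    (psubset (lambdaF U) V <-> psubset U (rhoF V)).

End Correspondence.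

Definition is_weyl_algebra (k : fieldType) (S : algType k) (x y : S) : Prop :=
  y * x - x * y = 1 /\
  forall (B : algType k) (a b : B), b * a - a * b = 1 ->
    (exists phi : S -> B,
       [/\ phi 1 = 1,
           (forall s t, phi (s + t) = phi s + phi t),
           (forall (c : k) s, phi (c *: s) = c *: phi s),
           (forall s t, phi (s * t) = phi s * phi t) &
           phi x = a /\ phi y = b]) /\
    (forall phi psi : S -> B,
       phi 1 = 1 -> (forall s t, phi (s + t) = phi s + phi t) ->
       (forall (c : k) s, phi (c *: s) = c *: phi s) ->
       (forall s t, phi (s * t) = phi s * phi t) -> phi x = a -> phi y = b ->
       psi 1 = 1 -> (forall s t, psi (s + t) = psi s + psi t) ->
       (forall (c : k) s, psi (c *: s) = c *: psi s) ->
       (forall s t, psi (s * t) = psi s * psi t) -> psi x = a -> psi y = b ->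
       forall s, phi s = psi s).

From HB Require Import structures.
From mathcomp Require Import all_boot all_order all_algebra.
From mathcomp Require Import boolp classical_sets.
Import GRing.Theory.
Local Open Scope ring_scope.
Set Implicit Arguments. Unset Strict Implicit.

(* A proper two-sided ideal of S meets k[x] only in 0: if it contains p(x) it
   contains the commutator [y, p(x)] = p'(x), and in characteristic 0 this
   descends to a nonzero constant.  Hence r maps every prime of S to the zero
   ideal of k[x], and the preimage of any closed set under r is either Spec S
   or empty.
   For the adjunction take V = V(x).  Since I(V) lies in (x), the ideal
   I(V)^S is proper: acting on k[t] by x = d/dt and y = -t, every element of
   S(x) kills 1.  By Zorn a maximal, hence prime, ideal M contains I(V)^S, so
   U = V(I(V)^S) = rho V is nonempty; but lambda U contains the zero ideal of
   k[x], which is not in V. *)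

Section IdealTheory.
Variable A : pzRingType.
Implicit Types E I J M X : pset A.

Lemma ideal0 I : is_ideal I -> I 0. Proof. by case. Qed.

Lemma idealD I a b : is_ideal I -> I a -> I b -> I (a + b).
Proof.
case=> I0 IB _ _ Ia Ib; rewrite -[b]opprK; apply: (IB) => //.
by rewrite -sub0r; apply: IB.
Qed.

Definition ideal_add I J : pset A := fun a => exists m i, [/\ I m, J i & a = m + i].

Lemma ideal_add_ideal I J : is_ideal I -> is_ideal J -> is_ideal (ideal_add I J).
Proof.
case=> I0 IB IL IR [J0 JB JL JR]; split.
- by exists 0, 0; rewrite addr0.
- move=> _ _ [m1 [i1 [Im1 Ji1 ->]]] [m2 [i2 [Im2 Ji2 ->]]].
  by exists (m1 - m2), (i1 - i2); split; [apply: IB | apply: JB | rewrite opprD addrACA].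
- move=> r _ [m [i [Im Ji ->]]].
  by exists (r * m), (r * i); split; [apply: IL | apply: JL | rewrite mulrDr].
- move=> r _ [m [i [Im Ji ->]]].
  by exists (m * r), (i * r); split; [apply: IR | apply: JR | rewrite mulrDl].
Qed.

Definition is_maximal_ideal M : Prop :=
  [/\ is_ideal M, ~ M 1 &
      forall I, is_ideal I -> psubset M I -> ~ I 1 -> psubset I M].

Lemma maximal_ideal_prime M : is_maximal_ideal M -> is_prime M.
Proof.
case=> IM NM Mmax; split => // I J II IJ IJM.
have one_in_add K : is_ideal K -> ~ psubset K M -> exists m i, [/\ M m, K i & 1 = m + i].
  move=> IK NKM; apply: contrapT => N1; apply: NKM => a Ka.
  apply: (Mmax (ideal_add M K)) => //; first exact: ideal_add_ideal.
    by move=> m Mm; exists m, 0; rewrite addr0; split => //; apply: ideal0.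
  by exists 0, a; rewrite add0r; split => //; apply: ideal0.
have [|/(one_in_add _ II) [m [i [Mm Ii Ei]]]] := pselect (psubset I M).
  by left.
have [|/(one_in_add _ IJ) [m' [j [Mm' Jj Ej]]]] := pselect (psubset J M).
  by right.
case: NM; have [_ _ ML MR] := IM.
rewrite -[1]mulr1 {1}Ei Ej mulrDl !mulrDr.
by do 3?[apply: idealD] => //; [apply: MR | apply: MR | apply: ML | apply: IJM].
Qed.

Definition proper_ideal_over E X : Prop := [/\ is_ideal X, psubset E X & ~ X 1].

Local Open Scope classical_set_scope.

Lemma bigcup_chain_proper_ideal E (F : set (set A)) X0 a0 :
  total_on F subset -> (forall X a, F X -> X a -> proper_ideal_over E X) ->
  F X0 -> X0 a0 -> proper_ideal_over E (\bigcup_(X in F) X).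
Proof.
move=> Ftot FP FX0 X0a0; have [[I0 _ _ _] EX0 _] := FP _ _ FX0 X0a0; split.
- split; first by exists X0.
  + move=> a b [X1 F1 X1a] [X2 F2 X2b].
    have [[_ B1 _ _] _ _] := FP _ _ F1 X1a; have [[_ B2 _ _] _ _] := FP _ _ F2 X2b.
    by case: (Ftot X1 X2 F1 F2) => S12; [exists X2 => //; apply: B2 => //; apply: S12
                                          | exists X1 => //; apply: B1 => //; apply: S12].
  + move=> r a [X FX Xa]; have [[_ _ L _] _ _] := FP _ _ FX Xa.
    by exists X => //; apply: L.
  + move=> r a [X FX Xa]; have [[_ _ _ R] _ _] := FP _ _ FX Xa.
    by exists X => //; apply: R.
- by move=> a Ea; exists X0 => //; apply: EX0.
- by case=> X FX X1; have [_ _] := FP _ _ FX X1; apply.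
Qed.

Lemma exists_maximal_ideal E : is_ideal E -> ~ E 1 ->
  exists2 M, is_maximal_ideal M & psubset E M.
Proof.
move=> IE NE; pose P X := (forall a, ~ X a) \/ proper_ideal_over E X.
have chainP (F : set (set A)) : F `<=` P -> total_on F subset -> P (\bigcup_(X in F) X).
  move=> FP Ftot; have [[X0 [a0 [FX0 X0a0]]]|Fempty] := pselect (exists X a, F X /\ X a).
    right; apply: bigcup_chain_proper_ideal Ftot _ FX0 X0a0 => X a FX Xa.
    by case: (FP X FX) => // /(_ a).
  by left=> a [X FX Xa]; apply: Fempty; exists X, a.
have [M [[Mempty|[IM EM NM]] Mmax]] := Zorn_bigcup chainP.
  exfalso; apply: (Mmax E); last by right; split.
  by split=> [a /Mempty //|/(_ 0 (ideal0 IE))/Mempty].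
exists M => //; split=> // I II MI NI a Ia; apply: contrapT => NMa.
apply: (Mmax I); last by right; split=> // b /EM /MI.
by split=> // /(_ a Ia).
Qed.

End IdealTheory.

Section PolyEndomorphisms.
Variable R : comNzRingType.

Record polyEnd := PolyEnd {
  pend_fun :> {poly R} -> {poly R};
  pend_linear : forall c u v, pend_fun (c *: u + v) = c *: pend_fun u + pend_fun v }.

HB.instance Definition _ := gen_eqMixin polyEnd.
HB.instance Definition _ := gen_choiceMixin polyEnd.

Lemma pend_ext (A B : polyEnd) : A =1 B -> A = B.
Proof.
case: A B => [a ha] [b hb] /= /funext eq_ab; subst b.
by congr PolyEnd; apply: Prop_irrelevance.
Qed.

Lemma pend0 (A : polyEnd) : A 0 = 0.
Proof.
have := pend_linear A 1 0 0; rewrite !scale1r addr0 => AA0.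
by apply: (addrI (A 0)); rewrite addr0 -AA0.
Qed.

Lemma pendD (A : polyEnd) u v : A (u + v) = A u + A v.
Proof. by have := pend_linear A 1 u v; rewrite !scale1r. Qed.

Lemma pendZ (A : polyEnd) c u : A (c *: u) = c *: A u.
Proof. by have := pend_linear A c u 0; rewrite !addr0 pend0 addr0. Qed.

Program Definition pend_zero : polyEnd := @PolyEnd (fun _ => 0) _.
Next Obligation. by rewrite scaler0 addr0. Qed.
Program Definition pend_add (A B : polyEnd) : polyEnd := @PolyEnd (fun u => A u + B u) _.
Next Obligation. by rewrite !pend_linear scalerDr addrACA. Qed.
Program Definition pend_opp (A : polyEnd) : polyEnd := @PolyEnd (fun u => - A u) _.
Next Obligation. by rewrite pend_linear opprD scalerN. Qed.
Program Definition pend_one : polyEnd := @PolyEnd id _.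
Program Definition pend_mul (A B : polyEnd) : polyEnd := @PolyEnd (fun u => A (B u)) _.
Next Obligation. by rewrite !pend_linear. Qed.
Program Definition pend_scale (a : R) (A : polyEnd) : polyEnd :=
  @PolyEnd (fun u => a *: A u) _.
Next Obligation. by rewrite pend_linear scalerDr !scalerA mulrC. Qed.

Lemma pend_addA : associative pend_add.
Proof. by move=> A B C; apply: pend_ext => u /=; rewrite addrA. Qed.
Lemma pend_addC : commutative pend_add.
Proof. by move=> A B; apply: pend_ext => u /=; rewrite addrC. Qed.
Lemma pend_add0 : left_id pend_zero pend_add.
Proof. by move=> A; apply: pend_ext => u /=; rewrite add0r. Qed.
Lemma pend_addN : left_inverse pend_zero pend_opp pend_add.
Proof. by move=> A; apply: pend_ext => u /=; rewrite addNr. Qed.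
HB.instance Definition _ :=
  GRing.isZmodule.Build polyEnd pend_addA pend_addC pend_add0 pend_addN.

Lemma pend_mulA : associative pend_mul. Proof. by move=> A B C; apply: pend_ext. Qed.
Lemma pend_mul1 : left_id pend_one pend_mul. Proof. by move=> A; apply: pend_ext. Qed.
Lemma pend_mulr1 : right_id pend_one pend_mul. Proof. by move=> A; apply: pend_ext. Qed.
Lemma pend_mulDl : left_distributive pend_mul +%R.
Proof. by move=> A B C; apply: pend_ext. Qed.
Lemma pend_mulDr : right_distributive pend_mul +%R.
Proof. by move=> A B C; apply: pend_ext => u /=; rewrite pendD. Qed.
Lemma pend_one_neq0 : pend_one != 0.
Proof. by apply/eqP => /(congr1 (pend_fun^~ 1)) /eqP; rewrite oner_eq0. Qed.
HB.instance Definition _ := GRing.Zmodule_isNzRing.Build polyEnd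
  pend_mulA pend_mul1 pend_mulr1 pend_mulDl pend_mulDr pend_one_neq0.

Lemma pend_scaleA a b (A : polyEnd) :
  pend_scale a (pend_scale b A) = pend_scale (a * b) A.
Proof. by apply: pend_ext => u /=; rewrite scalerA. Qed.
Lemma pend_scale1 : left_id 1 pend_scale.
Proof. by move=> A; apply: pend_ext => u /=; rewrite scale1r. Qed.
Lemma pend_scaleDr : right_distributive pend_scale +%R.
Proof. by move=> a A B; apply: pend_ext => u /=; rewrite scalerDr. Qed.
Lemma pend_scaleDl (A : polyEnd) : {morph pend_scale^~ A : a b / a + b}.
Proof. by move=> a b; apply: pend_ext => u /=; rewrite scalerDl. Qed.
HB.instance Definition _ := GRing.Zmodule_isLmodule.Build R polyEnd
  pend_scaleA pend_scale1 pend_scaleDr pend_scaleDl.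

Lemma pend_scaleAl (a : R) (A B : polyEnd) : a *: (A * B) = (a *: A) * B.
Proof. by apply: pend_ext. Qed.
HB.instance Definition _ := GRing.Lmodule_isLalgebra.Build R polyEnd pend_scaleAl.
Lemma pend_scaleAr (a : R) (A B : polyEnd) : a *: (A * B) = A * (a *: B).
Proof. by apply: pend_ext => u /=; rewrite pendZ. Qed.
HB.instance Definition _ := GRing.Lalgebra_isAlgebra.Build R polyEnd pend_scaleAr.

Lemma pend_sumE I (r : seq I) (P : pred I) (F : I -> polyEnd) u :
  (\sum_(i <- r | P i) F i) u = \sum_(i <- r | P i) F i u.
Proof. by elim/big_rec2: _ => // i A v _ /= ->. Qed.

Program Definition pend_deriv : polyEnd := @PolyEnd (@deriv R) _.
Next Obligation. by rewrite derivD derivZ. Qed.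
Program Definition pend_mulX : polyEnd := @PolyEnd ( *%R 'X) _.
Next Obligation. by rewrite mulrDr scalerAr. Qed.

Lemma pend_weyl_relation : (- pend_mulX) * pend_deriv - pend_deriv * (- pend_mulX) = 1.
Proof.
apply: pend_ext => u /=.
by rewrite derivN derivM derivX mul1r opprK addrC addrK.
Qed.

End PolyEndomorphisms.

Lemma kernel_prime (A : pzRingType) (D : idomainType) (g : {rmorphism A -> D}) :
  is_prime (fun a => g a = 0).
Proof.
split.
- split=> [|a b ga gb|r a ga|r a ga]; rewrite ?rmorph0 ?rmorphB ?rmorphM ?ga ?gb;
    by rewrite ?subrr ?mulr0 ?mul0r.
- by rewrite rmorph1 => /eqP; rewrite oner_eq0.
- move=> I J _ _ IJg; apply: contrapT => /not_orP[/existsNP[a /not_implyP[Ia gaN0]]].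
  move=> /existsNP[b /not_implyP[Jb gbN0]]; have := IJg a b Ia Jb.
  by rewrite rmorphM => /eqP; rewrite mulf_eq0 => /orP[] /eqP.
Qed.

Section Extension.
Variables (R S : pzRingType) (f : R -> S).
Implicit Types I J : pset R.

Lemma SI0 I : SI f I 0.
Proof. by exists 0%N, (fun _ => 0), (fun _ => 0); split; [case | rewrite big_ord0]. Qed.

Lemma SIB I a b : SI f I a -> SI f I b -> SI f I (a - b).
Proof.
move=> [n1 [s1 [i1 [I1 ->]]]] [n2 [s2 [i2 [I2 ->]]]].
exists (n1 + n2)%N.
exists (fun j => match split j with inl j1 => s1 j1 | inr j2 => - s2 j2 end).
exists (fun j => match split j with inl j1 => i1 j1 | inr j2 => i2 j2 end).
split=> [j|]; first by case: (split j).
rewrite big_split_ord -sumrN; congr (_ + _); apply: eq_bigr => j _.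
  by rewrite (unsplitK (inl j)).
by rewrite (unsplitK (inr j)) mulNr.
Qed.

Lemma SIMl I r a : SI f I a -> SI f I (r * a).
Proof.
move=> [n [s [i [Ii ->]]]]; exists n, (fun j => r * s j), i; split=> //.
by rewrite mulr_sumr; apply: eq_bigr => j _; rewrite mulrA.
Qed.

Lemma SI_subset I J : psubset I J -> psubset (SI f I) (SI f J).
Proof. by move=> IJ a [n [s [i [Ii ->]]]]; exists n, s, i; split=> // j; apply: IJ. Qed.

Lemma extS_ideal I : is_ideal (extS f I).
Proof.
split=> [t|a b Ha Hb t|r a Ha t|r a Ha t]; rewrite ?mul0r ?mulrBl -?mulrA.
- exact: SI0.
- exact: SIB.
- exact: SIMl.
- exact: Ha.
Qed.

End Extension.

Section WeylAlgebra.
Variables (k : fieldType) (S : algType k) (x y : S).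
Local Notation f := (horner_alg x).

Lemma horner_algMXaddC q c : f (q * 'X + c%:P) = f q * x + c%:A.
Proof. by rewrite rmorphD rmorphM /= horner_algX horner_algC. Qed.

Section Commutator.
Hypothesis weyl_rel : y * x - x * y = 1.

Lemma horner_alg_commutator p : y * f p - f p * y = f p^`().
Proof.
elim/poly_ind: p => [|q c IHq]; first by rewrite deriv0 !rmorph0 mulr0 mul0r subrr.
rewrite derivMXaddC horner_algMXaddC rmorphD rmorphM /= horner_algX -IHq.
rewrite mulrDr mulrDl mulr_algr mulr_algl opprD addrACA subrr addr0.
have -> : y * (f q * x) - f q * x * y = (y * f q - f q * y) * x + f q * (y * x - x * y).
  by rewrite mulrBl mulrBr !mulrA addrA subrK.
by rewrite weyl_rel mulr1 addrC.
Qed.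

Lemma proper_ideal_horner_alg_eq0 (P : pset S) p :
  [pchar k] =i pred0 -> is_ideal P -> ~ P 1 -> P (f p) -> p = 0.
Proof.
move=> char0 [_ PB PL PR] P1; elim: {p}(size p) {-2}p (leqnn (size p)) => [|n IHn] p.
  by rewrite leqn0 size_poly_eq0 => /eqP.
move=> size_p Pfp; have [size_p_le1|size_p_gt1] := leqP (size p) 1.
  move: Pfp; rewrite [p]size1_polyC // horner_algC => Pp0.
  apply/eqP; rewrite polyC_eq0; apply: contraT => p0_neq0; case: P1.
  by have := PL ((p`_0)^-1)%:A _ Pp0; rewrite mulr_algl scalerA mulVf ?scale1r.
have p_neq0 : p != 0 by rewrite -size_poly_gt0 ltnW.
have dp_eq0 : p^`() = 0.
  apply: IHn; first by rewrite -ltnS (leq_trans (lt_size_deriv p_neq0)).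
  by rewrite -horner_alg_commutator; apply: PB; [apply: PL | apply: PR].
have : (p^`())`_(size p).-2 = 0 by rewrite dp_eq0 coef0.
rewrite coef_deriv -mulr_natr.
have -> : (size p).-2.+1 = (size p).-1 by case: (size p) size_p_gt1 => [|[|]].
move=> /eqP; rewrite mulf_eq0 -lead_coefE lead_coef_eq0.
rewrite (negbTE p_neq0) /=; move/pcharf0P: char0 => ->.
by case: (size p) size_p_gt1 => [|[|]].
Qed.

End Commutator.

(* Represent x by d/dt and y by -t on k[t]; then p(x) sends 1 to p(0). *)
Lemma weyl_one_notin_SI_root0 : is_weyl_algebra x y ->
  ~ SI f (fun p => p.[0] = 0) 1.
Proof.
case=> _ /(_ _ _ _ (pend_weyl_relation k)) [[phi [phi1 phiD phiZ phiM [phix _]]] _].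
case=> n [s [i [i_root0 one_sum]]].
have phi0 : phi 0 = 0 by apply: (addrI (phi 0)); rewrite -phiD !addr0.
have phi_sum (F : 'I_n -> S) : phi (\sum_j F j) = \sum_j phi (F j).
  by elim/big_rec2: _ => // j a b _ <-; rewrite phiD.
have phi_f_1 p : phi (f p) 1 = p.[0]%:P.
  elim/poly_ind: p => [|q c IHq]; first by rewrite rmorph0 phi0 horner0.
  rewrite horner_algMXaddC phiD phiM phiZ phi1 phix /= hornerMXaddC.
  by rewrite -alg_polyC derivC pend0 add0r mulr0 add0r.
have := congr1 (fun s => phi s 1) one_sum; rewrite phi1 phi_sum pend_sumE /=.
rewrite big1 => [/eqP|j _]; first by rewrite oner_eq0.
by rewrite phiM /= phi_f_1 i_root0 pend0.
Qed.

End WeylAlgebra.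

Section WeylCorrespondence.
Variables (k : fieldType) (S : algType k) (x y : S).
Hypotheses (char0 : [pchar k] =i pred0) (weyl : is_weyl_algebra x y).
Local Notation f := (horner_alg x).

Let zero_ideal : pset {poly k} := fun p => p = 0.

Lemma contr_prime_weyl (P : pset S) p : is_prime P -> contr f P p <-> p = 0.
Proof.
case=> IP P1 _; split; first exact: (proper_ideal_horner_alg_eq0 weyl.1).
by move=> ->; rewrite /contr rmorph0; case: IP.
Qed.

Lemma rcorr_prime_weyl (P : pset S) Q :
  is_prime P -> rcorr f P Q <-> Q = zero_ideal.
Proof.
have zero_prime : is_prime zero_ideal := kernel_prime idfun.
move=> PP; have contrP_zero : psubset (contr f P) zero_ideal.
  by move=> p /(contr_prime_weyl p PP).
split=> [[[[Q0 _ _ _] _ _] _ Qmin]|->]; last first.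
  by split=> // Q' [[Q'0 _ _ _] _ _] _ _ p ->.
have Q_zero : psubset Q zero_ideal by apply: Qmin => // p ->.
by apply/funext => p; apply/propext; split=> [/Q_zero|->].
Qed.

Lemma rcorr_single_valued_weyl : rcorr_single_valued f.
Proof.
move=> P PP; exists zero_ideal; split; first exact/(rcorr_prime_weyl _ PP).
by move=> Q /(rcorr_prime_weyl _ PP) ->.
Qed.

Lemma rcorr_continuous_weyl : rcorr_continuous f.
Proof.
move=> V _; have [V0|V0N] := pselect (V zero_ideal).
  exists (fun _ => False) => P; split=> [[PP _] | [PP _]].
    by split; last by move=> ? [].
  by split=> // Q /(rcorr_prime_weyl _ PP) ->.
exists (fun _ => True) => P; split=> [[PP rPV] | [[_ P1 _] P_all]].
  by case: V0N; apply/rPV/(rcorr_prime_weyl _ PP).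
by case: P1; apply: P_all.
Qed.

Lemma not_lambda_left_adjoint_rho_weyl : ~ lambda_left_adjoint_rho f.
Proof.
move=> adj; pose V := VZ (fun p : {poly k} => p = 'X); pose E := extS f (IZ V).
have E_proper : ~ E 1.
  move=> /(_ 1); rewrite mulr1 => /SI_subset SIE1; apply: (weyl_one_notin_SI_root0 weyl).
  apply: SIE1 => p /(_ (fun p : {poly k} => p.[0] = 0)); apply.
  by split=> [|_ ->]; [exact: (kernel_prime (horner_eval 0)) | rewrite hornerX].
have [M /maximal_ideal_prime PM EM] :=
  exists_maximal_ideal (extS_ideal f (IZ V)) E_proper.
have lambdaV : psubset (lambdaF f (VZ E)) V.
  by apply/(adj _ _ (ex_intro _ E (fun=> iff_refl _)) (ex_intro _ _ (fun=> iff_refl _))).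
have zero_in_V : V zero_ideal.
  apply: lambdaV; split=> [|p IUfp]; first exact: (kernel_prime idfun).
  by apply/(contr_prime_weyl p PM); apply: IUfp M (conj PM EM).
have [_ /(_ 'X erefl) /eqP] := zero_in_V.
by rewrite polyX_eq0.
Qed.

End WeylCorrespondence.

Theorem mainTheorem13 (k : fieldType) (Hchar : [pchar k] =i pred0)
  (S : algType k) (x y : S) (HW : is_weyl_algebra x y) :
  let f : {poly k} -> S := horner_alg x in
  [/\ rcorr_single_valued f,
      rcorr_continuous f &
      ~ lambda_left_adjoint_rho f].
Proof.
split.
- exact: rcorr_single_valued_weyl Hchar HW.
- exact: rcorr_continuous_weyl Hchar HW.
- exact: not_lambda_left_adjoint_rho_weyl Hchar HW.
Qed.
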